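(* Let $R_1,R_2$ be integrally closed integral domains with the same fraction field $K$. If the structure $(K;R_1,R_2)$ (the field $K$ in the language of rings expanded by unary predicates for $R_1$ and $R_2$) is inp-minimal, then $R_1\subseteq R_2$ or $R_2\subseteq R_1$.
   Context: Rings are commutative with identity. Inp-minimal: the theory of the structure has burden $1$ (no inp-pattern of depth $2$ in one variable). *)

From HB Require Import structures.
From mathcomp Require Import all_boot all_order all_algebra.
Set Implicit Arguments. Unset Strict Implicit. Unset Printing Implicit Defensive.
Import Order.TTheory GRing.Theory Num.Theory.
Local Open Scope ring_scope.

Definition is_subring (K : fieldType) (R : {pred K}) : Prop :=
  [/\ (1 : K) \in R,
      (forall x y, x \in R -> y \in R -> x - y \in R) &
      (forall x y, x \in R -> y \in R -> x * y \in R)].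

Definition has_fraction_field (K : fieldType) (R : {pred K}) : Prop :=
  forall x : K, exists a b, [/\ a \in R, b \in R, b != 0 & x = a / b].

Definition integrally_closed_in (K : fieldType) (R : {pred K}) : Prop :=
  forall (p : {poly K}) (x : K),
    p \is monic -> p \is a polyOver R -> root p x -> x \in R.

Inductive term : Type :=
| TVar : nat -> term
| TZero : term
| TOne : term
| TAdd : term -> term -> term
| TOpp : term -> term
| TMul : term -> term -> term.

Inductive form : Type :=
| FEq : term -> term -> form
| FP1 : term -> form
| FP2 : term -> form
| FFalse : form
| FNot : form -> form
| FAnd : form -> form -> form
| FOr : form -> form -> form
| FImp : form -> form -> form
| FEx : form -> form     (* binds de Bruijn variable 0 *)
| FAll : form -> form.

Record structure : Type := Structure {
  carrier :> Type;
  s_zero : carrier;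
  s_one : carrier;
  s_add : carrier -> carrier -> carrier;
  s_opp : carrier -> carrier;
  s_mul : carrier -> carrier -> carrier;
  s_P1 : carrier -> Prop;
  s_P2 : carrier -> Prop }.

Definition scons (M : Type) (x : M) (e : nat -> M) : nat -> M :=
  fun n => match n with 0 => x | S n' => e n' end.

Fixpoint teval (M : structure) (e : nat -> M) (t : term) : M :=
  match t with
  | TVar n => e n
  | TZero => s_zero M
  | TOne => s_one M
  | TAdd t1 t2 => s_add (teval e t1) (teval e t2)
  | TOpp t1 => s_opp (teval e t1)
  | TMul t1 t2 => s_mul (teval e t1) (teval e t2)
  end.

Fixpoint sat (M : structure) (e : nat -> M) (f : form) : Prop :=
  match f with
  | FEq t1 t2 => teval e t1 = teval e t2
  | FP1 t => s_P1 (teval e t)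
  | FP2 t => s_P2 (teval e t)
  | FFalse => False
  | FNot g => ~ sat e g
  | FAnd g h => sat e g /\ sat e h
  | FOr g h => sat e g \/ sat e h
  | FImp g h => sat e g -> sat e h
  | FEx g => exists x : M, sat (scons x e) g
  | FAll g => forall x : M, sat (scons x e) g
  end.

(* M |= f : f holds under every assignment (i.e. its universal closure holds). *)
Definition valid (M : structure) (f : form) : Prop := forall e : nat -> M, sat e f.

(* N is a model of Th(M). *)
Definition elem_equiv (M N : structure) : Prop :=
  forall f : form, valid M f <-> valid N f.

(* A formula
   phi(x; y) is read with x = de Bruijn variable 0 and the parameter tuple
   y = variables 1, 2, ...; the parameter a i j : nat -> N is the tuple
   substituted in row i, column j (j ranges over omega).
   Rows are k_i-inconsistent; every path is consistent. *)
Definition inp_pattern2 (N : structure) : Prop :=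
  exists (phi : 'I_2 -> form) (k : 'I_2 -> nat) (a : 'I_2 -> nat -> nat -> N),
    (forall i : 'I_2, forall S : seq nat, uniq S -> size S = k i ->
        ~ exists x : N, forall j, j \in S -> sat (scons x (a i j)) (phi i)) /\
    (forall f : 'I_2 -> nat,
        exists x : N, forall i : 'I_2, sat (scons x (a i (f i))) (phi i)).

Definition inp_minimal (M : structure) : Prop :=
  forall N : structure, elem_equiv M N -> ~ inp_pattern2 N.

Definition field_with_preds (K : fieldType) (R1 R2 : {pred K}) : structure :=
  @Structure K 0 1 (fun x y => x + y) (fun x => - x) (fun x y => x * y)
    (fun x => x \in R1) (fun x => x \in R2).

From Pilot Require Import Defs.
From HB Require Import structures.
From mathcomp Require Import all_boot all_order all_algebra.
From Stdlib Require Import Classical.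
Import Order.TTheory GRing.Theory Num.Theory.
Local Open Scope ring_scope.
Set Implicit Arguments. Unset Strict Implicit.

(* Two integrally closed subrings R1, R2 of a field K that are incomparable
   yield an inp-pattern of depth 2 in (K; R1, R2) itself, so (K; R1, R2) is
   not inp-minimal.  Pick a in R1 \ R2 and b in R2 \ R1 and use the formulas
     phi_0(x; y) : x - y in R1,        phi_1(x; y) : x - y in R2,
   with parameters b^j in row 0 and a^j in row 1.
   - Rows are 2-inconsistent: if x - b^j and x - b^k both lie in R1 then so
     does b^k - b^j, and for j < k the monic polynomial X^k - X^j - (b^k - b^j)
     over R1 has root b; integral closedness then forces b in R1.  Row 1 is
     symmetric.
   - Paths are consistent: x = b^j + a^k satisfies x - b^j = a^k in R1 and
     x - a^k = b^j in R2. *)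

Section IntegrallyClosedSubring.

Variables (K : fieldType) (R : {pred K}).
Hypothesis subR : is_subring R.
Hypothesis closedR : integrally_closed_in R.

(* Registering R as a subring gives access to the generic rpred* lemmas. *)
Let subring_closedR : subring_closed R.
Proof. by case: subR => one_mem sub_mem mul_mem; split. Qed.
HB.instance Definition _ := GRing.isSubringClosed.Build K R subring_closedR.

(* If b^k - b^j lies in R for some j < k, then b is integral over R, hence in R. *)
Lemma power_difference_mem (b : K) (j k : nat) :
  (j < k)%N -> b ^+ k - b ^+ j \in R -> b \in R.
Proof.
move=> ltjk Rr; set r := b ^+ k - b ^+ j.
pose p : {poly K} := 'X^k - 'X^j - r%:P.
(* X^k strictly dominates the other terms, so p is monic. *)
have size_low : (size (- 'X^j - r%:P : {poly K})%R < size ('X^k : {poly K}))%N.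
  rewrite size_polyXn (leq_ltn_trans (size_polyD _ _)) //.
  rewrite size_polyN size_polyXn gtn_max ltnS ltjk /= size_polyN.
  by rewrite (leq_ltn_trans (size_polyC_leq1 _)) // ltnS (leq_ltn_trans _ ltjk).
apply: (closedR (p := p)).
- by rewrite monicE /p -addrA (lead_coefDl size_low) lead_coefXn.
- by rewrite !rpredB ?polyOverXn ?polyOverC.
- by rewrite /root /p !hornerE /r subrr.
Qed.

(* Two distinct powers of an element outside R cannot both be R-translates of
   the same x: this is the 2-inconsistency of a row of the pattern. *)
Lemma no_common_power_translate (b x : K) (j k : nat) :
  b \notin R -> j != k -> x - b ^+ j \in R -> x - b ^+ k \in R -> False.
Proof.
move=> bR neqjk Rj Rk; apply: (negP bR).
have Rdiff : b ^+ k - b ^+ j \in R.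
  have -> : b ^+ k - b ^+ j = (x - b ^+ j) - (x - b ^+ k).
    by rewrite [RHS]addrC opprB addrA subrK.
  exact: rpredB.
move: neqjk; rewrite neq_ltn => /orP [ltjk|ltkj].
- exact: power_difference_mem ltjk Rdiff.
- by apply: power_difference_mem ltkj _; rewrite -opprB rpredN.
Qed.

Lemma subring_power_mem (a : K) (n : nat) : a \in R -> a ^+ n \in R.
Proof. exact: rpredX. Qed.

End IntegrallyClosedSubring.

Definition difference_formula (P : term -> Defs.form) : Defs.form :=
  P (TAdd (TVar 0) (TOpp (TVar 1))).

Definition pattern_formula (i : 'I_2) : Defs.form :=
  if val i == 0%N then difference_formula FP1 else difference_formula FP2.

Lemma sat_pattern_formula (K : fieldType) (R1 R2 : {pred K}) (i : 'I_2)
    (x : K) (e : nat -> K) :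
  sat (M := field_with_preds R1 R2) (scons x e) (pattern_formula i) <->
  x - e 0%N \in (if val i == 0%N then R1 else R2).
Proof. by rewrite /pattern_formula; case: ifP. Qed.

Lemma incomparable_inp_pattern (K : fieldType) (R1 R2 : {pred K}) (a b : K) :
  is_subring R1 -> integrally_closed_in R1 ->
  is_subring R2 -> integrally_closed_in R2 ->
  a \in R1 -> a \notin R2 -> b \in R2 -> b \notin R1 ->
  inp_pattern2 (field_with_preds R1 R2).
Proof.
move=> sub1 closed1 sub2 closed2 a1 a2 b2 b1.
pose base (i : 'I_2) : K := if val i == 0%N then b else a.
exists pattern_formula, (fun _ => 2%N), (fun i j _ => base i ^+ j); split.
- move=> i [|j [|k []]] //= uniqS _ [x /= satS].
  have neqjk : j != k by move: uniqS; rewrite !inE andbT.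
  have /sat_pattern_formula Rj := satS j (mem_head _ _).
  have /sat_pattern_formula Rk := satS k (mem_last j [:: k]).
  rewrite /base in Rj Rk; case: ifP Rj Rk => _ Rj Rk.
  + exact: (no_common_power_translate sub1 closed1 b1 neqjk Rj Rk).
  + exact: (no_common_power_translate sub2 closed2 a2 neqjk Rj Rk).
- move=> f; exists (b ^+ f ord0 + a ^+ f ord_max) => i.
  apply/sat_pattern_formula; rewrite /base.
  case: i => [[|[|//]] lti] /=.
  + rewrite (_ : Ordinal lti = ord0); last exact: val_inj.
    by rewrite addrC addKr subring_power_mem.
  + rewrite (_ : Ordinal lti = ord_max); last exact: val_inj.
    by rewrite addrK subring_power_mem.
Qed.

Theorem mainTheorem17 (K : fieldType) (R1 R2 : {pred K}) :
  is_subring R1 -> has_fraction_field R1 -> integrally_closed_in R1 ->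
  is_subring R2 -> has_fraction_field R2 -> integrally_closed_in R2 ->
  inp_minimal (field_with_preds R1 R2) ->
  {subset R1 <= R2} \/ {subset R2 <= R1}.
Proof.
move=> sub1 _ closed1 sub2 _ closed2 minimal.
apply: NNPP => /not_or_and [not12 not21].
have [a /andP [a1 a2]] : exists a, (a \in R1) && (a \notin R2).
  apply: NNPP => none; apply: not12 => x x1; apply/negPn/negP => x2.
  by apply: none; exists x; rewrite x1 x2.
have [b /andP [b2 b1]] : exists b, (b \in R2) && (b \notin R1).
  apply: NNPP => none; apply: not21 => x x2; apply/negPn/negP => x1.
  by apply: none; exists x; rewrite x1 x2.
(* The pattern lives in (K; R1, R2) itself, a model of its own theory. *)
apply: (minimal (field_with_preds R1 R2)); first by move=> f.
exact: (incomparable_inp_pattern sub1 closed1 sub2 closed2 a1 a2 b2 b1).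
Qed.
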